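(* Let $p,p'\in(0,1/2)$ be constants with $p'<p$. For every two-sided $p$-error PACA $C$ with constant time complexity $T=O(1)$ there is a two-sided $p'$-error PACA $C'$ with time complexity $O(T)=O(1)$ such that $L(C)=L(C')$.
   Context: PACA: a bounded one-dimensional CA with state set $Q$, input alphabet $\Sigma\subseteq Q$, accepting states $A\subseteq Q$, boundary symbol $\$$ and two local transition functions $\delta_0,\delta_1$; at each step every cell independently tosses a fair coin $c$ and updates by $\delta_c$ applied to its left neighbor, itself and its right neighbor ($\$$ beyond borders). On input $x\in\Sigma^n$, a computation is accepting if at some step all cells are simultaneously in $A$. $C$ has time complexity $T$ if every accepting computation on inputs of length $n$ first reaches $A^n$ at a step $<T(n)$. For $p<1/2$, $C$ is a two-sided $p$-error PACA for $L$ if for every input $x$: $x\in L\iff\Pr[C\text{ accepts }x]\ge1-p$ and $x\notin L\iff\Pr[C\text{ accepts }x]\le p$; then $L(C)=L$. *)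

From HB Require Import structures.
From mathcomp Require Import all_boot all_order all_algebra.
From mathcomp Require Import classical_sets reals.
Set Implicit Arguments. Unset Strict Implicit. Unset Printing Implicit Defensive.
Import Order.TTheory GRing.Theory Num.Theory.
Local Open Scope classical_set_scope.
Local Open Scope ring_scope.

(* Sigma ⊆ Q is modelled by an
   injection inp : Sigma -> Q; the boundary symbol $ is modelled by None
   (neighbours are of type option Q); delta c is the local rule δ_c. *)
Record PACA (Sigma : finType) := MkPACA {
  st : finType;
  inp : Sigma -> st;
  inp_inj : injective inp;
  acc : pred st;
  delta : bool -> option st -> st -> option st -> st
}.

Section Dyn.
Variables (Sigma : finType) (C : PACA Sigma).

(* A configuration: cell i (i < n) holds Some q; outside cells are None ($). *)
Definition config := nat -> option (st C).

Definition cfg0 (x : seq Sigma) : config := fun i => omap (@inp _ C) (onth x i).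

Definition step (n : nat) (coins : nat -> bool) (c : config) : config :=
  fun i => if (i < n)%N then
             match c i with
             | Some q => Some (@delta _ C (coins i)
                                (if i is j.+1 then c j else None) q (c i.+1))
             | None => None
             end
           else None.

(* coins s i = coin of cell i at step s (the step from config s to s+1) *)
Fixpoint run (x : seq Sigma) (coins : nat -> nat -> bool) (t : nat) : config :=
  if t is s.+1 then step (size x) (coins s) (run x coins s) else cfg0 x.

Definition allA (n : nat) (c : config) : bool :=
  [forall i : 'I_n, if c i is Some q then @acc _ C q else false].

Definition accepts_at x coins t := allA (size x) (run x coins t).

Definition time_complexity (T : nat -> nat) : Prop :=
  forall x coins t, accepts_at x coins t ->
    exists2 t', (t' < T (size x))%N & accepts_at x coins t'.

(* finite coin array for the first t steps, extended by false *)
Definition ext_coins t n (c : {ffun 'I_t * 'I_n -> bool}) : nat -> nat -> bool :=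
  fun s i => match insub s, insub i with
             | Some s', Some i' => c (s', i')
             | _, _ => false
             end.

Definition good_coins (x : seq Sigma) (t : nat)
  : pred {ffun 'I_t * 'I_(size x) -> bool} :=
  fun c => [exists t' : 'I_t.+1, accepts_at x (ext_coins c) t'].

Definition acc_within (R : realType) (x : seq Sigma) (t : nat) : R :=
  (#|@good_coins x t|)%:R / (2 ^ (t * size x))%:R.

(* Pr[C accepts x]: probability of the increasing union of the events
   "accepts at some step <= t", i.e. the supremum over t. *)
Definition acc_prob (R : realType) (x : seq Sigma) : R :=
  sup (range (@acc_within R x)).

(* C is a two-sided p-error PACA for L (so L(C) = L). *)
Definition two_sided (R : realType) (p : R) (L : seq Sigma -> Prop) : Prop :=
  forall x, (L x <-> 1 - p <= acc_prob R x) /\ (~ L x <-> acc_prob R x <= p).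

End Dyn.

From HB Require Import structures.
From mathcomp Require Import all_boot all_order all_algebra.
From mathcomp Require Import classical_sets reals.
From mathcomp Require Import zify ring lra boolp.
Import Order.TTheory GRing.Theory Num.Theory.

Set Implicit Arguments.
Unset Strict Implicit.
Unset Printing Implicit Defensive.

(* Run 2m+1 copies of C with independent coins and accept by majority vote.  As C decides
   within T steps, each copy accepts with the acceptance probability q of C, and the vote
   accepts with probability sum_(b majority) q^|b| (1-q)^(2m+1-|b|).  If q <= p < 1/2 every
   term is at most (p (1-p))^m, so the vote errs with probability at most
   2^(2m+1) (p (1-p))^m = 2 (4 p (1-p))^m, which is below p' for m large.  The copies are run
   one after the other inside every cell, so the time complexity stays constant. *)

Section Runs.
Variables (Sigma : finType) (C : PACA Sigma).

Lemma run_outside x coins t i : size x <= i -> run C x coins t i = None.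
Proof.
move=> hi; case: t => [|t] /=; first by rewrite /cfg0 onth_default.
by rewrite /step ltnNge hi.
Qed.

Lemma eq_run x c1 c2 t :
  (forall s i, s < t -> i < size x -> c1 s i = c2 s i) ->
  run C x c1 t =1 run C x c2 t.
Proof.
elim: t => [|t IH] eq_c i //=.
have {}IH := IH (fun s i hs => eq_c s i (ltnW hs)).
rewrite /step; case: ifP => // hi.
by rewrite !IH eq_c //; case: i hi => [|j] hi; rewrite ?IH.
Qed.

Lemma eq_accepts_at x c1 c2 t :
  (forall s i, s < t -> i < size x -> c1 s i = c2 s i) ->
  accepts_at C x c1 t = accepts_at C x c2 t.
Proof.
by move=> eq_c; apply: eq_forallb => i; rewrite (eq_run eq_c).
Qed.

Lemma accepts_at_size0 x coins t : size x = 0 -> accepts_at C x coins t.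
Proof. by rewrite /accepts_at /allA => ->; apply/forallP => -[]. Qed.

Lemma time_complexity_gt0 T : time_complexity C (fun _ => T) -> 0 < T.
Proof.
move=> CT; have [t' + _] := CT [::] (fun _ _ => false) 0 (@accepts_at_size0 [::] _ _ erefl).
by case: T {CT}.
Qed.

Lemma time_complexityW T T' : (forall n, T n <= T' n) ->
  time_complexity C T -> time_complexity C T'.
Proof.
move=> le_T CT x coins t /CT[t' lt_t' acc_t'].
by exists t' => //; apply: leq_trans lt_t' (le_T _).
Qed.

End Runs.

Lemma card_precomp (D E : finType) (g : E -> D) (Q : pred {ffun E -> bool}) :
  injective g ->
  #|[pred c : {ffun D -> bool} | Q [ffun e => c (g e)]]| = #|Q| * 2 ^ (#|D| - #|E|).
Proof.
move=> g_inj; pose restr (c : {ffun D -> bool}) := [ffun e => c (g e)].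
pose F (b : {ffun E -> bool}) (d : D) : pred bool :=
  fun v => if [pick e | g e == d] is Some e then v == b e else true.
have familyE b c : (c \in family (F b)) = (restr c == b).
  apply/familyP/eqP => [Fc | <-].
    apply/ffunP => e; rewrite ffunE; have := Fc (g e); rewrite /F /in_mem /=.
    by case: pickP => [e' /eqP/g_inj -> /eqP //|/(_ e)]; rewrite eqxx.
  by move=> d; rewrite /F /in_mem /=; case: pickP => // e /eqP <-; rewrite ffunE.
have card_family_F b : #|family (F b)| = 2 ^ (#|D| - #|E|).
  rewrite card_family foldrE big_map big_enum /= (bigID (mem (codom g))) /=.
  rewrite big1 ?mul1n; last first.
    move=> d /codomP[e ->]; rewrite /F.
    case: pickP => [e' /eqP/g_inj -> |/(_ e)]; last by rewrite eqxx.
    by rewrite (eq_card (B := pred1 (b e))) ?card1.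
  rewrite (eq_bigr (fun _ => 2)); last first.
    move=> d d_img; rewrite /F; case: pickP => [e /eqP eq_ged|_].
      by rewrite -eq_ged codom_f in d_img.
    by rewrite (eq_card (B := predT)) // card_bool.
  rewrite prod_nat_const; congr (_ ^ _).
  rewrite -(card_codom g_inj) -[X in _ = X - _](cardC (mem (codom g))).
  by rewrite addKn; apply: eq_card.
rewrite -sum1_card (partition_big restr Q) //= -sum_nat_const.
apply: eq_bigr => b Qb; rewrite -(card_family_F b) -sum1_card; apply: eq_bigl => c.
by rewrite familyE /in_mem /= andb_idl // /restr => /eqP ->.
Qed.

Lemma card_curry (K X : finType) (P : pred {ffun K -> {ffun X -> bool}}) :
  #|[pred e : {ffun K * X -> bool} | P [ffun j => [ffun y => e (j, y)]]]| = #|P|.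
Proof.
pose cur (e : {ffun K * X -> bool}) := [ffun j => [ffun y => e (j, y)]].
pose unc (F : {ffun K -> {ffun X -> bool}}) := [ffun jy : K * X => F jy.1 jy.2].
have curK : cancel cur unc by move=> e; apply/ffunP => -[j y]; rewrite !ffunE.
have uncK : cancel unc cur by move=> F; apply/ffunP => j; apply/ffunP => y; rewrite !ffunE.
rewrite -(card_image (can_inj curK) [pred e | P (cur e)]).
apply: eq_card => F; apply/fintype.imageP/idP => [[e Pe ->] //|PF].
by exists (unc F); rewrite // inE uncK.
Qed.

Lemma card_ffun_preim (K Y : finType) (G : pred Y) (M : pred {ffun K -> bool}) :
  #|[pred F : {ffun K -> Y} | M [ffun j => G (F j)]]| =
  \sum_(b | M b) \prod_j (if b j then #|G| else #|[predC G]|).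
Proof.
rewrite -[LHS]sum1_card (partition_big (I := {ffun K -> Y}) (J := {ffun K -> bool})
  (fun F => [ffun j => G (F j)]) M) //=.
apply: eq_bigr => b Mb; pose Fb (j : K) : pred Y := [pred y | G y == b j].
transitivity #|family Fb|.
  rewrite -sum1_card; apply: eq_bigl => F; apply/andP/familyP => [[_ /eqP eq_b] j|FbF].
    by rewrite inE -eq_b ffunE.
  suff eq_b : [ffun j => G (F j)] = b by rewrite inE eq_b.
  by apply/ffunP => j; have := FbF j; rewrite inE ffunE => /eqP.
rewrite card_family foldrE big_map big_enum /=; apply: eq_bigr => j _.
by rewrite /Fb; case: (b j); apply: eq_card => y; rewrite !inE ?eqb_id ?eqbF_neg.
Qed.

Definition majority n (b : {ffun 'I_n -> bool}) : bool := n < 2 * #|[pred j | b j]|.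

Lemma majority_negb m (b : {ffun 'I_(2 * m).+1 -> bool}) :
  majority [ffun j => ~~ b j] = ~~ majority b.
Proof.
rewrite /majority (eq_card (B := [predC [pred j | b j]])) => [|j]; last by rewrite !inE ffunE.
have := cardC [pred j | b j]; rewrite card_ord.
move: #|[pred j | b j]| #|[predC [pred j | b j]]| => c c'; lia.
Qed.

Lemma sub_majority n (b b' : {ffun 'I_n -> bool}) :
  {subset [pred j | b j] <= [pred j | b' j]} -> majority b -> majority b'.
Proof.
move=> sub_bb' maj_b; apply: leq_trans maj_b _; rewrite leq_mul2l subset_leq_card ?orbT //.
exact/fintype.subsetP.
Qed.

Lemma majorityT k : majority [ffun _ : 'I_k.+1 => true].
Proof.
rewrite /majority (eq_card (B := predT)) => [|j]; last by rewrite !inE ffunE.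
by rewrite card_ord; lia.
Qed.

Lemma ext_coinsE t n (c : {ffun 'I_t * 'I_n -> bool}) s i (hs : s < t) (hi : i < n) :
  ext_coins c s i = c (Ordinal hs, Ordinal hi).
Proof. by rewrite /ext_coins (insubT (fun s => s < t) hs) (insubT (fun i => i < n) hi). Qed.

Definition widen_time t t' n (h : t <= t') (e : 'I_t * 'I_n) : 'I_t' * 'I_n :=
  (widen_ord h e.1, e.2).

Lemma widen_time_inj t t' n (h : t <= t') : injective (@widen_time t t' n h).
Proof. by move=> [s i] [s' i'] [/= /val_inj-> ->]. Qed.

Lemma mulnD_ord_inj d s s' (j j' : 'I_d) : s * d + j = s' * d + j' -> s = s' /\ j = j'.
Proof.
move=> eq_sj; have d_gt0 : 0 < d by case: d j {eq_sj j'} => [[]|].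
have eq_s := congr1 (divn^~ d) eq_sj; rewrite /= !divnMDl // !divn_small // !addn0 in eq_s.
by split=> //; apply/val_inj/(@addnI (s * d)); rewrite {2}eq_s.
Qed.

Section CoinArrays.
Variables (Sigma : finType) (C : PACA Sigma) (x : seq Sigma).

Lemma good_coins_widen t t' (h : t <= t') (c : {ffun 'I_t' * 'I_(size x) -> bool}) :
  good_coins C [ffun e => c (widen_time h e)] =
  [exists u : 'I_t.+1, accepts_at C x (ext_coins c) u].
Proof.
apply: eq_existsb => u; apply: eq_accepts_at => s i hs hi.
have hst : s < t by rewrite (leq_trans hs) // -ltnS.
rewrite (ext_coinsE _ hst hi) (ext_coinsE _ (leq_trans hst h) hi) ffunE.
by congr (c (_, _)); apply: val_inj.
Qed.

End CoinArrays.

(* [amplify C k S] simulates k.+1 copies of C for S steps: step s of copy j is performed at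
   clock s * k.+1 + j with the coins of that clock, so every cell keeps a table of the states
   of all copies at all times <= S, entry (j, t) being written at clock (t - 1) * k.+1 + j
   (tested without subtraction, so that no entry matches once the simulation is over).
   A cell cannot know when the copies accept in the other cells, so after the simulation the
   clock runs through all patterns (which copy accepts, and when), and the automaton accepts
   at a pattern in which a majority of copies accept, provided every cell confirms it. *)
Section Amplification.
Variables (Sigma : finType) (C : PACA Sigma) (k S : nat).
Local Notation kk := k.+1.
Local Notation pattern := {ffun 'I_kk -> option 'I_S.+1}.
Local Notation table := {ffun 'I_kk * 'I_S.+1 -> st C}.

Definition sim_time := kk * S.
Definition num_patterns := size (enum pattern).
Definition amp_time := sim_time + num_patterns.
Local Notation state := ('I_amp_time.+1 * table)%type.

Definition nth_pattern (r : nat) : pattern := nth [ffun=> None] (enum pattern) r.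

Definition confirms (pi : pattern) (h : table) : bool :=
  majority [ffun j => pi j != None] &&
  [forall j, if pi j is Some t then @acc _ C (h (j, t)) else true].

Definition amp_acc (s : state) : bool :=
  [&& sim_time <= s.1, s.1 - sim_time < num_patterns &
      confirms (nth_pattern (s.1 - sim_time)) s.2].

Definition amp_delta (c : bool) (l : option state) (s : state) (r : option state) : state :=
  let look (o : option state) jt := omap (fun q : state => q.2 jt) o in
  (inord (minn s.1.+1 amp_time),
   [ffun jt : 'I_kk * 'I_S.+1 =>
      let jt' := (jt.1, inord jt.2.-1) in
      if jt.2 * kk + jt.1 == s.1 + kk then @delta _ C c (look l jt') (s.2 jt') (look r jt')
      else s.2 jt]).

Definition amp_inp (a : Sigma) : state := (ord0, [ffun=> @inp _ C a]).

Lemma amp_inp_inj : injective amp_inp.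
Proof.
move=> a b [] /(congr1 (fun h : table => h (ord0, ord0))); rewrite !ffunE.
exact: inp_inj.
Qed.

Definition amplify : PACA Sigma := @MkPACA Sigma state amp_inp amp_inp_inj amp_acc amp_delta.

Definition copy_coins (coins : nat -> nat -> bool) (j : nat) : nat -> nat -> bool :=
  fun s i => coins (s * kk + j) i.

Lemma slot_lt (j : 'I_kk) (t : 'I_S.+1) : t * kk + j < sim_time + kk.
Proof. by have := ltn_ord t; have := ltn_ord j; rewrite /sim_time; nia. Qed.

Definition simulates x coins u i (s : state) : Prop :=
  s.1 = minn u amp_time :> nat /\
  forall (j : 'I_kk) (t : 'I_S.+1), t * kk + j < u + kk ->
    run C x (copy_coins coins j) t i = Some (s.2 (j, t)).

Lemma run_amplify0 x coins i : i < size x ->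
  exists2 s, run amplify x coins 0 i = Some s & simulates x coins 0 i s.
Proof.
move=> lt_i; have [a x_i] : exists a, onth x i = Some a.
  by case E: (onth x i) => [a|]; [exists a | move: (onthTE x i); rewrite E lt_i].
exists (amp_inp a); first by rewrite /= /cfg0 x_i.
split=> [|j t lt_tj]; first by rewrite min0n.
have -> : nat_of_ord t = 0 by nia.
by rewrite /= /cfg0 x_i ffunE.
Qed.

Lemma run_amplifyS x coins u :
  (forall i, i < size x ->
     exists2 s, run amplify x coins u i = Some s & simulates x coins u i s) ->
  forall i, i < size x ->
  exists2 s, run amplify x coins u.+1 i = Some s & simulates x coins u.+1 i s.
Proof.
move=> IH i lt_i; have [[u' h] run_u [clock_u sim_u]] := IH i lt_i.
have look_u (j : 'I_kk) (t : 'I_S.+1) i' : t * kk + j < u + kk ->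
    omap (fun q : state => q.2 (j, t)) (run amplify x coins u i') =
    run C x (copy_coins coins j) t i'.
  move=> lt_tj; have [lt_i'|ge_i'] := ltnP i' (size x); last by rewrite !run_outside.
  by have [s' -> [_ sim']] := IH i' lt_i'; rewrite sim'.
eexists; first by rewrite /= /step lt_i run_u.
split=> [|j t lt_tj]; first by rewrite /= inordK ?ltnS ?geq_minr //= clock_u; lia.
rewrite /= ffunE; case: eqP => [slot|not_slot]; last first.
  apply: sim_u; have := slot_lt j t; move: not_slot lt_tj; rewrite /= clock_u /amp_time.
  by move: (t * kk + j) => v; lia.
have eq_u : u' = u :> nat.
  have := slot_lt j t; move: slot; rewrite /= clock_u /amp_time.
  by move: (t * kk + j) => v; lia.
have t_gt0 : 0 < t by move: slot (ltn_ord j); rewrite /= eq_u; case: (nat_of_ord t); lia.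
have t_pred : t.-1 * kk + j = u.
  by move: slot; rewrite /= eq_u -{1}(prednK t_gt0) mulSnr; move: (t.-1 * kk) => v; lia.
set t' : 'I_S.+1 := inord t.-1.
have t'E : t' = t.-1 :> nat by rewrite inordK // (leq_ltn_trans (leq_pred _) (ltn_ord t)).
have lt_t'j : (t' * kk + j < u + kk) by rewrite t'E t_pred -addn1 leq_add2l.
have coin_u : copy_coins coins j t' i = coins u i by rewrite /copy_coins t'E t_pred.
rewrite -[X in run C x _ X](prednK t_gt0) /= /step lt_i -t'E (sim_u _ _ lt_t'j) coin_u.
rewrite (look_u _ _ _ lt_t'j).
by case: i {lt_i run_u sim_u coin_u} => [|i] //=; rewrite (look_u _ _ _ lt_t'j).
Qed.

Lemma run_amplify x coins u i : i < size x ->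
  exists2 s, run amplify x coins u i = Some s & simulates x coins u i s.
Proof. by elim: u i => [|u IH]; [exact: run_amplify0 | exact: run_amplifyS]. Qed.

Lemma simulates_complete x coins u i s : sim_time <= u -> simulates x coins u i s ->
  forall (j : 'I_kk) (t : 'I_S.+1), run C x (copy_coins coins j) t i = Some (s.2 (j, t)).
Proof.
move=> le_u [_ sim_s] j t; apply: sim_s.
by apply: leq_trans (slot_lt j t) _; rewrite leq_add2r.
Qed.

Definition copy_accepts x coins (j : 'I_kk) : bool :=
  [exists t : 'I_S.+1, accepts_at C x (copy_coins coins j) t].

Lemma amplify_accepts_majority x coins u :
  accepts_at amplify x coins u -> majority [ffun j => copy_accepts x coins j].
Proof.
have [x0|x_gt0] := posnP (size x).
  move=> _; apply: sub_majority (majorityT k) => j _; rewrite inE ffunE.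
  by apply/existsP; exists ord0; apply: accepts_at_size0.
move=> /forallP acc_u; have [s run_s [clock_s _]] := run_amplify coins u x_gt0.
have := acc_u (Ordinal x_gt0); rewrite /= run_s => /and3P[le_s _ /andP[maj_pi _]].
apply: sub_majority maj_pi => j; rewrite !inE !ffunE.
case pi_j: (nth_pattern (s.1 - sim_time) j) => [t|] // _.
apply/existsP; exists t; apply/forallP => i.
have [si run_si sim_si] := run_amplify coins u (ltn_ord i).
have le_u : sim_time <= u by move: le_s; rewrite clock_s; lia.
rewrite (simulates_complete le_u sim_si).
have := acc_u i; rewrite run_si => /and3P[_ _ /andP[_ /forallP/(_ j)]].
have -> : si.1 = s.1 by apply: val_inj; rewrite /= sim_si.1 clock_s.
by rewrite pi_j.
Qed.
Lemma majority_amplify_accepts x coins : majority [ffun j => copy_accepts x coins j] ->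
  exists2 u, (u < amp_time) & accepts_at amplify x coins u.
Proof.
move=> maj_x.
pose pi : pattern := [ffun j : 'I_kk => [pick t : 'I_S.+1 | accepts_at C x (copy_coins coins j) t]].
have pi_some j : (pi j != None) = copy_accepts x coins j.
  rewrite ffunE; case: pickP => [t acc_t|none]; apply/esym/existsP; first by exists t.
  by case=> t; rewrite none.
pose r := index pi (enum pattern).
have lt_r : r < num_patterns by rewrite index_mem mem_enum.
exists (sim_time + r); first by rewrite ltn_add2l.
apply/forallP => i; have [s run_s sim_s] := run_amplify coins (sim_time + r) (ltn_ord i).
have clock_s : s.1 = sim_time + r :> nat by rewrite sim_s.1 /amp_time; lia.
rewrite run_s /= /amp_acc clock_s leq_addr addKn lt_r /confirms /nth_pattern.
rewrite nth_index ?mem_enum //=; apply/andP; split.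
  suff -> : [ffun j => pi j != None] = [ffun j => copy_accepts x coins j] by [].
  by apply/ffunP => j; rewrite [LHS]ffunE [RHS]ffunE pi_some.
apply/forallP => j; rewrite ffunE; case: pickP => // t /forallP/(_ i).
by rewrite (simulates_complete (leq_addr _ _) sim_s).
Qed.

Lemma amplify_time_complexity : time_complexity amplify (fun _ => amp_time).
Proof.
by move=> x coins u /amplify_accepts_majority/majority_amplify_accepts.
Qed.

End Amplification.

Section CopyCoins.
Variables (Sigma : finType) (C : PACA Sigma) (k S : nat) (x : seq Sigma).
Local Notation kk := k.+1.
Local Notation n := (size x).

Lemma copy_index_lt t (h : sim_time k S <= t) (j : 'I_kk) (s : 'I_S) : s * kk + j < t.
Proof. by have := ltn_ord s; have := ltn_ord j; move: h; rewrite /sim_time; nia. Qed.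

Definition copy_index t (h : sim_time k S <= t) (e : 'I_kk * ('I_S * 'I_n)) : 'I_t * 'I_n :=
  (Ordinal (copy_index_lt h e.1 e.2.1), e.2.2).

Lemma copy_index_inj t (h : sim_time k S <= t) : injective (copy_index h).
Proof. by move=> [j [s i]] [j' [s' i']] [/= /mulnD_ord_inj[/val_inj-> ->] ->]. Qed.

Lemma good_coins_copy t (h : sim_time k S <= t) (c : {ffun 'I_t * 'I_n -> bool}) (j : 'I_kk) :
  good_coins C [ffun y => c (copy_index h (j, y))] = copy_accepts C S x (ext_coins c) j.
Proof.
apply: eq_existsb => u; apply: eq_accepts_at => s i lt_s lt_i.
have lt_sS : s < S by rewrite (leq_trans lt_s) // -ltnS.
rewrite (ext_coinsE _ lt_sS lt_i) ffunE /copy_coins.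
rewrite (ext_coinsE _ (copy_index_lt h j (Ordinal lt_sS)) lt_i).
by congr (c (_, _)); apply: val_inj.
Qed.

Lemma good_coins_amplify (c : {ffun 'I_(amp_time k S) * 'I_n -> bool}) :
  good_coins (amplify C k S) c =
  majority [ffun j => good_coins C [ffun y => c (copy_index (leq_addr _ _) (j, y))]].
Proof.
rewrite (_ : [ffun j => _] = [ffun j => copy_accepts C S x (ext_coins c) j]); last first.
  by apply/ffunP => j; rewrite !ffunE good_coins_copy.
apply/existsP/idP => [[u /amplify_accepts_majority //]|/majority_amplify_accepts[u lt_u acc_u]].
by exists (Ordinal (ltnW lt_u : u < (amp_time k S).+1)).
Qed.

End CopyCoins.

Local Open Scope ring_scope.

Section CoinProbability.
Variable R : realType.

Definition coin_prob (D : finType) (P : pred {ffun D -> bool}) : R :=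
  #|P|%:R / (2 ^ #|D|)%:R.

Lemma coin_prob_ge0 (D : finType) (P : pred {ffun D -> bool}) : 0 <= coin_prob P.
Proof. by rewrite divr_ge0. Qed.

Lemma coin_prob_le1 (D : finType) (P : pred {ffun D -> bool}) : coin_prob P <= 1.
Proof.
rewrite ler_pdivrMr ?ltr0n ?expn_gt0 // mul1r ler_nat.
by rewrite -card_bool -card_ffun max_card.
Qed.

Lemma le_coin_prob (D : finType) (P Q : pred {ffun D -> bool}) :
  {subset P <= Q} -> coin_prob P <= coin_prob Q.
Proof.
by move=> sPQ; rewrite ler_wpM2r ?invr_ge0 // ler_nat; apply/subset_leq_card/fintype.subsetP.
Qed.

Lemma eq_coin_prob (D : finType) (P Q : pred {ffun D -> bool}) :
  P =i Q -> coin_prob P = coin_prob Q.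
Proof. by move=> eqPQ; rewrite /coin_prob (eq_card eqPQ). Qed.

Lemma coin_prob_precomp (D E : finType) (g : E -> D) (Q : pred {ffun E -> bool}) :
  injective g -> coin_prob [pred c : {ffun D -> bool} | Q [ffun e => c (g e)]] = coin_prob Q.
Proof.
move=> g_inj; rewrite /coin_prob card_precomp // -(subnKC (leq_card _ g_inj)).
rewrite addKn expnD !natrM invfM mulrACA divff ?mulr1 //.
by rewrite pnatr_eq0 expn_eq0.
Qed.

End CoinProbability.

Lemma coin_prob_blocks (R : realType) (K X : finType) (G : pred {ffun X -> bool})
    (M : pred {ffun K -> bool}) :
  coin_prob R [pred e : {ffun K * X -> bool} | M [ffun j => G [ffun y => e (j, y)]]] =
  \sum_(b | M b) \prod_j (if b j then coin_prob R G else 1 - coin_prob R G).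
Proof.
rewrite /coin_prob card_prod.
have -> : #|[pred e : {ffun K * X -> bool} | M [ffun j => G [ffun y => e (j, y)]]]| =
          #|[pred F : {ffun K -> {ffun X -> bool}} | M [ffun j => G (F j)]]|.
  rewrite -card_curry; apply: eq_card => e; rewrite !inE.
  by congr M; apply/ffunP => j; rewrite !ffunE.
rewrite (card_ffun_preim G M) natr_sum mulr_suml; apply: eq_bigr => b _.
have -> : (2 ^ (#|K| * #|X|))%N = (\prod_(j : K) 2 ^ #|X|)%N.
  by rewrite prod_nat_const -expnM mulnC.
rewrite !natr_prod -prodf_div; apply: eq_bigr => j _.
have card_X : (#|G| + #|[predC G]|)%N = (2 ^ #|X|)%N by rewrite cardC card_ffun card_bool.
have two_X_neq0 : (2 ^ #|X|)%:R != 0 :> R by rewrite pnatr_eq0 expn_eq0.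
case: (b j) => //; apply: (mulIf two_X_neq0).
by rewrite mulrBl mul1r !divfK // -card_X natrD addrAC subrr add0r.
Qed.

Section AcceptanceProbability.
Variables (Sigma : finType) (C : PACA Sigma) (R : realType) (x : seq Sigma).

Lemma acc_withinE t : acc_within C R x t = coin_prob R (good_coins C (x := x) (t := t)).
Proof. by rewrite /coin_prob card_prod !card_ord. Qed.

Lemma acc_within_widen t t' (h : (t <= t')%N) :
  acc_within C R x t =
  coin_prob R [pred c : {ffun 'I_t' * 'I_(size x) -> bool} |
                [exists u : 'I_t.+1, accepts_at C x (ext_coins c) u]].
Proof.
rewrite acc_withinE -(coin_prob_precomp R _ (@widen_time_inj _ _ (size x) h)).
by apply: eq_coin_prob => c; rewrite !inE good_coins_widen.
Qed.

Lemma le_acc_within t t' : (t <= t')%N -> acc_within C R x t <= acc_within C R x t'.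
Proof.
move=> h; rewrite (acc_within_widen h) acc_withinE; apply: le_coin_prob => c.
rewrite inE => /existsP[u acc_u]; apply/existsP.
by exists (widen_ord (h : (t.+1 <= t'.+1)%N) u).
Qed.

Lemma acc_within_time_complexity T t t' : time_complexity C (fun _ => T) ->
  (T <= t.+1)%N -> acc_within C R x t' <= acc_within C R x t.
Proof.
move=> CT le_Tt; have [le_t't|lt_tt'] := leqP t' t; first exact: le_acc_within.
rewrite (acc_within_widen (ltnW lt_tt')) acc_withinE; apply: le_coin_prob => c.
move=> /existsP[u /CT[u' lt_u'T acc_u']]; rewrite inE; apply/existsP.
by exists (Ordinal (leq_trans lt_u'T le_Tt)).
Qed.

Lemma acc_prob_time_complexity T t : time_complexity C (fun _ => T) ->
  (T <= t.+1)%N -> acc_prob C R x = acc_within C R x t.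
Proof.
move=> CT le_Tt; apply/le_anti/andP; split.
  apply: ge_sup; first by exists (acc_within C R x 0), 0%N.
  by move=> _ [t' _ <-]; apply: acc_within_time_complexity CT le_Tt.
apply: ub_le_sup; last by exists t.
by exists (acc_within C R x t) => _ [t' _ <-]; apply: acc_within_time_complexity CT le_Tt.
Qed.

End AcceptanceProbability.

Section MajorityProbability.
Variable R : realFieldType.
Implicit Types q : R.

Definition majority_prob n q : R :=
  \sum_(b : {ffun 'I_n -> bool} | majority b) \prod_j (if b j then q else 1 - q).

Lemma prod_coins n (b : {ffun 'I_n -> bool}) q :
  \prod_j (if b j then q else 1 - q) = q ^+ #|[pred j | b j]| * (1 - q) ^+ #|[pred j | ~~ b j]|.
Proof.
rewrite (bigID (fun j => b j)) /= -!prodr_const.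
by congr (_ * _); apply: eq_big => // j; [move->|move/negbTE->].
Qed.

Lemma sum_prod_coins n q :
  \sum_(b : {ffun 'I_n -> bool}) \prod_j (if b j then q else 1 - q) = 1.
Proof.
rewrite -(bigA_distr_bigA (fun (j : 'I_n) (v : bool) => if v then q else 1 - q)) /=.
by apply: big1 => j _; rewrite big_bool /= subrKC.
Qed.

Lemma majority_prob1C m q : majority_prob (2 * m).+1 (1 - q) = 1 - majority_prob (2 * m).+1 q.
Proof.
pose negf (b : {ffun 'I_(2 * m).+1 -> bool}) := [ffun j => ~~ b j].
have negfK : involutive negf by move=> b; apply/ffunP => j; rewrite !ffunE negbK.
rewrite /majority_prob (reindex_inj (inv_inj negfK)) /=.
transitivity (\sum_(b : {ffun 'I_(2 * m).+1 -> bool} | ~~ majority b)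
                \prod_j (if b j then q else 1 - q)).
  apply: eq_big => [b|b _]; first exact: majority_negb.
  by apply: eq_bigr => j _; rewrite ffunE; case: (b j); rewrite //= subKr.
by have := sum_prod_coins (2 * m).+1 q; rewrite (bigID (@majority _)) /=; lra.
Qed.

Lemma majority_term_le q (m a c : nat) : 0 <= q -> q <= 1 - q ->
  (a + c = (2 * m).+1)%N -> (m < a)%N -> q ^+ a * (1 - q) ^+ c <= (q * (1 - q)) ^+ m.
Proof.
move=> q_ge0 q_le1q sum_ac lt_ma; pose e := (m - c)%N.
have -> : a = (c + (e + e).+1)%N by rewrite /e; lia.
have -> : m = (c + e)%N by rewrite /e; lia.
rewrite exprMn !exprD exprS exprD.
have -> : q ^+ c * (q * (q ^+ e * q ^+ e)) * (1 - q) ^+ c =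
          (q ^+ c * (1 - q) ^+ c) * (q ^+ e * (q * q ^+ e)) by ring.
have -> : q ^+ c * q ^+ e * ((1 - q) ^+ c * (1 - q) ^+ e) =
          (q ^+ c * (1 - q) ^+ c) * (q ^+ e * (1 - q) ^+ e) by ring.
rewrite ler_wpM2l ?mulr_ge0 ?exprn_ge0 //; first lra.
rewrite ler_wpM2l ?exprn_ge0 //.
apply: (@le_trans _ _ (q ^+ e)); first by rewrite ler_piMl ?exprn_ge0 //; lra.
by apply: lerXn2r; rewrite ?nnegrE //; lra.
Qed.

Lemma majority_prob_le_small m p q : 0 <= q -> q <= p -> p <= 1 / 2 ->
  majority_prob (2 * m).+1 q <= 2 ^+ (2 * m).+1 * (p * (1 - p)) ^+ m.
Proof.
move=> q_ge0 le_qp p_le_half; set B := (p * (1 - p)) ^+ m.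
have B_ge0 : 0 <= B by rewrite exprn_ge0 // mulr_ge0 //; lra.
have qq_le_pp : q * (1 - q) <= p * (1 - p) by nra.
apply: (@le_trans _ _ (\sum_(b : {ffun 'I_(2 * m).+1 -> bool} | majority b) B)).
  apply: ler_sum => b maj_b; rewrite prod_coins.
  apply: le_trans (majority_term_le _ _ _ _) _; rewrite ?cardC ?card_ord //; first lra.
    by move: maj_b; rewrite /majority; lia.
  by apply: lerXn2r; rewrite ?nnegrE //; nra.
apply: (@le_trans _ _ (\sum_(b : {ffun 'I_(2 * m).+1 -> bool}) B)).
  by rewrite [leRHS](bigID (@majority _)) /= lerDl sumr_ge0.
by rewrite sumr_const card_ffun card_bool card_ord -[leLHS]mulr_natl natrX.
Qed.

Lemma majority_prob_ge_large m p q : 1 - p <= q -> q <= 1 -> p <= 1 / 2 ->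
  1 - 2 ^+ (2 * m).+1 * (p * (1 - p)) ^+ m <= majority_prob (2 * m).+1 q.
Proof.
move=> le_1p_q q_le1 p_le_half.
have := @majority_prob_le_small m p (1 - q) ltac:(lra) ltac:(lra) p_le_half.
by rewrite majority_prob1C; lra.
Qed.

End MajorityProbability.

Lemma bernoulli_ineq (R : realDomainType) (d : R) n : 0 <= d -> 1 + n%:R * d <= (1 + d) ^+ n.
Proof.
move=> d_ge0; elim: n => [|n IH]; first by rewrite mul0r addr0 expr0.
rewrite exprS -addn1 natrD.
apply: (@le_trans _ _ ((1 + d) * (1 + n%:R * d))); last by rewrite ler_wpM2l //; lra.
have : 0 <= n%:R * d * d by rewrite !mulr_ge0 ?ler0n.
lra.
Qed.

Lemma exists_expr_le (R : archiRealFieldType) (r e : R) : 0 < r -> r < 1 -> 0 < e ->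
  exists n, r ^+ n <= e.
Proof.
move=> r_gt0 r_lt1 e_gt0; pose d := r^-1 - 1.
have d_gt0 : 0 < d by rewrite subr_gt0 invf_gt1.
pose n := Num.bound (e * d)^-1; exists n.
have lt_n : (e * d)^-1 < n%:R by apply: archi_boundP; rewrite invr_ge0 mulr_ge0 // ltW.
have rn_gt0 : 0 < r ^+ n by apply: exprn_gt0.
have : r ^+ n * (1 + n%:R * d) <= 1.
  have := bernoulli_ineq n (ltW d_gt0); rewrite /d subrKC exprVn => bern.
  by apply: le_trans (ler_wpM2l (ltW rn_gt0) bern) _; rewrite mulfV // lt0r_neq0.
have ed_gt0 : 0 < e * d by rewrite mulr_gt0.
have : e * d * (e * d)^-1 < e * d * n%:R by rewrite ltr_pM2l.
rewrite mulfV ?lt0r_neq0 //; nra.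
Qed.

Lemma exists_majority_bound (R : archiRealFieldType) (p p' : R) :
  0 < p' -> 0 < p -> p < 1 / 2 -> exists m, 2 ^+ (2 * m).+1 * (p * (1 - p)) ^+ m <= p'.
Proof.
move=> p'_gt0 p_gt0 p_lt_half.
have [m le_m] : exists m, (4 * (p * (1 - p))) ^+ m <= p' / 2.
  by apply: exists_expr_le; nra.
exists m; rewrite exprS exprM -mulrA -exprMn.
have -> : 2 ^+ 2 * (p * (1 - p)) = 4 * (p * (1 - p)) by ring.
lra.
Qed.

Lemma acc_within_amplify (Sigma : finType) (C : PACA Sigma) (k S : nat) (R : realType)
    (x : seq Sigma) :
  acc_within (amplify C k S) R x (amp_time k S) = majority_prob k.+1 (acc_within C R x S).
Proof.
pose h : (sim_time k S <= amp_time k S)%N := leq_addr _ _.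
pose copies := [pred e : {ffun 'I_k.+1 * ('I_S * 'I_(size x)) -> bool} |
  majority [ffun j => good_coins C (x := x) (t := S) [ffun y => e (j, y)]]].
rewrite !acc_withinE (eq_coin_prob _ (@good_coins_amplify _ C k S x)).
transitivity (coin_prob R [pred c : {ffun 'I_(amp_time k S) * 'I_(size x) -> bool} |
                             copies [ffun e => c (copy_index h e)]]).
  apply: eq_coin_prob => c; rewrite !inE; congr majority; apply/ffunP => j; rewrite !ffunE.
  by apply: congr1; apply/ffunP => y; rewrite !ffunE.
by rewrite coin_prob_precomp ?coin_prob_blocks //; apply: copy_index_inj.
Qed.

Lemma two_sided_transfer (Sigma : finType) (R : realType) (C C' : PACA Sigma) (p p' : R)
    (L : seq Sigma -> Prop) :
  p' < 1 / 2 -> two_sided C p L ->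
  (forall x, acc_prob C R x <= p -> acc_prob C' R x <= p') ->
  (forall x, 1 - p <= acc_prob C R x -> 1 - p' <= acc_prob C' R x) ->
  two_sided C' p' L.
Proof.
move=> p'_lt_half CL small large x; have [[memL _] [nmemL _]] := CL x.
have [Lx|nLx] := pselect (L x).
  have ge_1p' := large x (memL Lx).
  by split; [split=> _ | split=> [/(_ Lx)|le_p'] //; lra].
have le_p' := small x (nmemL nLx).
by split; [split=> [/nLx|ge_1p'] //; lra | split=> _].
Qed.

Theorem mainTheorem7 (Sigma : finType) (R : realType) (p p' : R) :
  0 < p' -> p' < p -> p < 1 / 2 ->
  forall (C : PACA Sigma) (L : seq Sigma -> Prop) (T : nat),
    two_sided C p L -> time_complexity C (fun _ => T) ->
    exists (C' : PACA Sigma) (K : nat),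
      two_sided C' p' L /\ time_complexity C' (fun _ => (K * T)%N).
Proof.
move=> p'_gt0 lt_p'p p_lt_half C L T CL CT.
have [S eq_T] : exists S, T = S.+1 by exists T.-1; rewrite prednK // (time_complexity_gt0 CT).
have [m le_m] := exists_majority_bound p'_gt0 (lt_trans p'_gt0 lt_p'p) p_lt_half.
pose C' := amplify C (2 * m) S.
have C'T : time_complexity C' (fun _ => amp_time (2 * m) S) by apply: amplify_time_complexity.
exists C', (amp_time (2 * m) S); split; last first.
  by apply: time_complexityW C'T => _; rewrite eq_T leq_pmulr.
have accC x : acc_prob C R x = acc_within C R x S.
  by apply: acc_prob_time_complexity CT _; rewrite eq_T.
have accC' x : acc_prob C' R x = majority_prob (2 * m).+1 (acc_within C R x S).
  by rewrite (acc_prob_time_complexity R x C'T (leqnSn _)) acc_within_amplify.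
apply: (two_sided_transfer _ CL) => [|x|x]; rewrite ?accC ?accC' ?acc_withinE.
- lra.
- move=> le_p; apply: le_trans le_m; apply: majority_prob_le_small le_p _.
    exact: coin_prob_ge0.
  lra.
- move=> ge_1p; apply: le_trans (majority_prob_ge_large _ ge_1p (coin_prob_le1 _ _) _); lra.
Qed.
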